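(* For a finite additive poset $A$ the following are equivalent: (i) $A$ is plain; (ii) the set of all order-preserving linear functionals on $A$ is separating; (iii) there exists a separating subset of $A^*$; (iv) there is a set $S\subset A^*$ with $\bigcap_{s\in S}\operatorname{Ker}s=0$ such that for all $a,b\in A$, $a\le b$ holds if and only if $s(a)\le_t s(b)$ for all $s\in S$.
   Context: An additive poset is a pair $(A,\le)$ where $A$ is an abelian group and $\le$ is a partial order on $A$ such that for all $a,b,c\in A$: $(\ast)$ if $b\le a$ and $c\le a$ then $b+c\le a$; $(\ast\ast)$ if $a\le b$ and $a\le c$ then $a\le a+b+c$. $A$ is a $\mathbb{Z}/2\mathbb{Z}$-vector space and $A^*=\operatorname{Hom}(A,\mathbb{Z}/2\mathbb{Z})$. The trivial order $\le_t$ on $\mathbb{Z}/2\mathbb{Z}$ is $0\le_t0$, $0\le_t1$, $1\le_t1$. A functional $f\in A^*$ is order-preserving if $a\le b$ implies $f(a)\le_t f(b)$. A set $S\subset A^*$ is separating if all its elements are order-preserving and for any $a,b\in A$ with $a\not\le b$ there is $s\in S$ with $s(a)=1$, $s(b)=0$. For a set $I$, $2^I$ denotes the subsets of $I$ with symmetric difference and inclusion. An embedding of additive posets $A\to B$ is an injective group homomorphism $\varphi$ with $a\le b\iff\varphi(a)\le\varphi(b)$. $A$ is plain if it embeds in $2^I$ for some finite set $I$. *)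

From HB Require Import structures.
From mathcomp Require Import all_boot all_order all_algebra.
Set Implicit Arguments. Unset Strict Implicit. Unset Printing Implicit Defensive.
Import GRing.Theory.
Local Open Scope ring_scope.

Definition additive_poset (A : zmodType) (le : A -> A -> Prop) : Prop :=
  [/\ (forall a, le a a),
      (forall a b, le a b -> le b a -> a = b),
      (forall a b c, le a b -> le b c -> le a c),
      (forall a b c, le b a -> le c a -> le (b + c) a) &
      (forall a b c, le a b -> le a c -> le a (a + b + c))].

Definition le_t (x y : 'Z_2) : Prop := (x <= y)%N.

(* elements of A^* = Hom(A, Z/2Z) *)
Definition is_functional (A : zmodType) (f : A -> 'Z_2) : Prop :=
  forall a b, f (a + b) = f a + f b.

Definition order_preserving (A : zmodType) (le : A -> A -> Prop)
  (f : A -> 'Z_2) : Prop :=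
  forall a b, le a b -> le_t (f a) (f b).

Definition subset_dual (A : zmodType) (S : (A -> 'Z_2) -> Prop) : Prop :=
  forall s, S s -> is_functional s.

Definition separating (A : zmodType) (le : A -> A -> Prop)
  (S : (A -> 'Z_2) -> Prop) : Prop :=
  (forall s, S s -> order_preserving le s) /\
  (forall a b, ~ le a b -> exists2 s, S s & s a = 1 /\ s b = 0).

(* 2^I : subsets of I with symmetric difference and inclusion *)
Definition symdiff (I : finType) (X Y : {set I}) : {set I} :=
  (X :\: Y) :|: (Y :\: X).

Definition embeds_in_powerset (A : zmodType) (le : A -> A -> Prop)
  (I : finType) : Prop :=
  exists phi : A -> {set I},
    [/\ injective phi,
        (forall a b, phi (a + b) = symdiff (phi a) (phi b)) &
        (forall a b, le a b <-> phi a \subset phi b)].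

Definition plain (A : zmodType) (le : A -> A -> Prop) : Prop :=
  exists I : finType, embeds_in_powerset le I.

(* A separating family (s_i) of order-preserving functionals indexed by a
   finite set I embeds A into 2^I by a |-> {i | s_i a = 1}: the map is
   additive because the s_i are linear over Z/2, and it is an order embedding
   because the family is order-preserving and separating.  Conversely the
   coordinate functionals X |-> [i \in X] of an embedding into 2^I form a
   separating family.  For order-preserving families, separating means
   exactly that the family detects the order, and such a family also detects
   0 because s 0 = 0 and the order is antisymmetric. *)

From mathcomp Require Import all_boot all_order all_algebra.
From mathcomp Require Import boolp.
Set Implicit Arguments.
Unset Strict Implicit.
Unset Printing Implicit Defensive.
Import GRing.Theory.
Local Open Scope ring_scope.

Lemma Z2_cases (x : 'Z_2) : x = 0 \/ x = 1.
Proof. by case: x => [[|[|n]] //= lt_n2]; [left | right]; apply: val_inj. Qed.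

Lemma Z2_addxx (x : 'Z_2) : x + x = 0.
Proof. by case: (Z2_cases x) => ->; apply/eqP. Qed.

Lemma Z2_le_tNP (x y : 'Z_2) : ~ le_t x y <-> x = 1 /\ y = 0.
Proof.
split; last by case=> -> ->.
by case: (Z2_cases x) => ->; case: (Z2_cases y) => -> // /(_ isT).
Qed.

Lemma functional0 (A : zmodType) (s : A -> 'Z_2) : is_functional s -> s 0 = 0.
Proof. by move=> s_lin; have := s_lin 0 0; rewrite addr0 Z2_addxx. Qed.

Section Separation.
Variables (A : zmodType) (le : A -> A -> Prop).

Lemma separatingS (S T : (A -> 'Z_2) -> Prop) :
  (forall s, S s -> T s) -> (forall s, T s -> order_preserving le s) ->
  separating le S -> separating le T.
Proof.
move=> ST T_op [_ S_sep]; split=> // a b /S_sep[s Ss s_ab].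
by exists s => //; apply: ST.
Qed.

Lemma separating_le (S : (A -> 'Z_2) -> Prop) :
  (forall s, S s -> order_preserving le s) ->
  separating le S <-> (forall a b, le a b <-> (forall s, S s -> le_t (s a) (s b))).
Proof.
move=> S_op; split=> [[_ S_sep] a b | S_le].
  split=> [le_ab s Ss | S_ab]; first exact: S_op.
  apply: contrapT => /S_sep[s Ss /Z2_le_tNP s_ab].
  exact: s_ab (S_ab s Ss).
split=> // a b /S_le le_abN; apply: contrapT => no_s; apply: le_abN => s Ss.
by apply: contrapT => /Z2_le_tNP s_ab; apply: no_s; exists s.
Qed.

Lemma le_kernel_trivial (S : (A -> 'Z_2) -> Prop) :
  (forall a b, le a b -> le b a -> a = b) -> subset_dual S ->
  (forall a b, le a b <-> (forall s, S s -> le_t (s a) (s b))) ->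
  forall a, (forall s, S s -> s a = 0) -> a = 0.
Proof.
move=> le_anti S_lin S_le a a_ker.
by apply: le_anti; apply/S_le => s Ss; rewrite a_ker // functional0 //; apply: S_lin.
Qed.

End Separation.

Lemma plain_separating (A : zmodType) (le : A -> A -> Prop) :
  plain le -> separating le (fun s => is_functional s /\ order_preserving le s).
Proof.
case=> I [phi [_ phiD phi_le]].
pose coord i a : 'Z_2 := if i \in phi a then 1 else 0.
have coord_lin i : is_functional (coord i).
  move=> a b; rewrite /coord phiD /symdiff !inE.
  by case: (i \in phi a); case: (i \in phi b); rewrite /= ?Z2_addxx ?addr0 ?add0r.
have coord_op i : order_preserving le (coord i).
  move=> a b /phi_le/subsetP sub_ab; rewrite /coord /le_t.
  by case ia: (i \in phi a); rewrite ?(sub_ab _ ia).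
split; first by move=> s [].
move=> a b le_abN.
have /subsetPn[i ia ib] : ~~ (phi a \subset phi b) by apply/negP => /phi_le.
exists (coord i); first exact: conj (coord_lin i) (coord_op i).
by rewrite /coord ia (negbTE ib).
Qed.

Section EmbeddingOfSeparatingFamily.
Variables (A : zmodType) (le : A -> A -> Prop) (I : finType) (ev : I -> A -> 'Z_2).
Hypotheses (le_anti : forall a b, le a b -> le b a -> a = b)
  (ev_lin : forall i, is_functional (ev i))
  (ev_op : forall i, order_preserving le (ev i))
  (ev_sep : forall a b, ~ le a b -> exists i, ev i a = 1 /\ ev i b = 0).

Definition support_set (a : A) : {set I} := [set i | ev i a == 1].

Lemma support_set_le a b : le a b <-> support_set a \subset support_set b.
Proof.
split=> [le_ab | sub_ab].
  apply/subsetP => i; rewrite !inE => /eqP ia; have := ev_op i le_ab.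
  by rewrite ia; case: (Z2_cases (ev i b)) => ->.
apply: contrapT => /ev_sep[i [ia ib]].
have /(subsetP sub_ab) : i \in support_set a by rewrite inE ia.
by rewrite inE ib.
Qed.

Lemma support_set_embedding : embeds_in_powerset le I.
Proof.
exists support_set; split.
- by move=> a b eq_ab; apply: le_anti; apply/support_set_le; rewrite eq_ab.
- move=> a b; apply/setP => i; rewrite /symdiff !inE ev_lin.
  by case: (Z2_cases (ev i a)) => ->; case: (Z2_cases (ev i b)) => ->.
- exact: support_set_le.
Qed.

End EmbeddingOfSeparatingFamily.

Lemma separating_plain (A : finZmodType) (le : A -> A -> Prop) :
  (forall a b, le a b -> le b a -> a = b) ->
  separating le (fun s => is_functional s /\ order_preserving le s) -> plain le.
Proof.
move=> le_anti [_ sep].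
pose good (f : {ffun A -> 'Z_2}) := is_functional f /\ order_preserving le f.
exists {f : {ffun A -> 'Z_2} | `[< good f >]}.
apply: (@support_set_embedding A le _
  (fun (i : {f : {ffun A -> 'Z_2} | `[< good f >]}) (x : A) => val i x)) => //.
- by move=> i; case/asboolP: (valP i).
- by move=> i; case/asboolP: (valP i).
move=> a b /sep[s [s_lin s_op] s_ab].
have f_good : `[< good [ffun x => s x] >].
  by apply/asboolP; split=> x y; rewrite !ffunE; [apply: s_lin | apply: s_op].
by exists (exist _ [ffun x => s x] f_good); rewrite /= !ffunE.
Qed.

Theorem theorem8p1 (A : finZmodType) (le : A -> A -> Prop)
  (hA : additive_poset le) :
  let P1 := plain le in
  let P2 := separating le
              (fun s => is_functional s /\ order_preserving le s) in
  let P3 := exists S : (A -> 'Z_2) -> Prop, subset_dual S /\ separating le S in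
  let P4 := exists S : (A -> 'Z_2) -> Prop,
      [/\ subset_dual S,
          (forall a : A, (forall s, S s -> s a = 0) -> a = 0) &
          (forall a b : A, le a b <-> (forall s, S s -> le_t (s a) (s b)))] in
  [/\ P1 <-> P2, P2 <-> P3 & P3 <-> P4].
Proof.
case: hA => _ le_anti _ _ _ /=.
split; first by split; [apply: plain_separating | apply: separating_plain].
- split=> [sepP2 | [S [S_lin sepS]]].
    by exists (fun s => is_functional s /\ order_preserving le s); split=> // s [].
  apply: (separatingS _ _ sepS) => [s Ss | s []] //.
  by split; [apply: S_lin | apply: sepS.1].
- split=> [[S [S_lin sepS]] | [S [S_lin _ S_le]]]; exists S.
    have S_le := (separating_le sepS.1).1 sepS.
    by split=> //; apply: le_kernel_trivial S_le.
  by split=> //; apply/separating_le => // s Ss a b /S_le; apply.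
Qed.
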